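(* Let $\{Y_n;\,n\ge1\}$ be a sequence of random variables with values in a real separable Banach space $\mathbf{B}$ such that $Y_n\to0$ in probability. Let $\{Y_n';\,n\ge1\}$ be an independent copy of $\{Y_n;\,n\ge1\}$ and set $\hat Y_n=Y_n-Y_n'$. Let $\{a_n;\,n\ge1\}$ be positive numbers with $a_n\to\infty$. If there exist constants $0\le\bar\gamma\le\underline\gamma\le\infty$ such that for all $s>0$ $$\limsup_{n\to\infty}\frac1{a_n}\log\mathbb{P}(\|\hat Y_n\|>s)=-\bar\gamma\quad\text{and}\quad\liminf_{n\to\infty}\frac1{a_n}\log\mathbb{P}(\|\hat Y_n\|>s)=-\underline\gamma,$$ then for all $s>0$ $$\limsup_{n\to\infty}\frac1{a_n}\log\mathbb{P}(\|Y_n\|>s)=-\bar\gamma\quad\text{and}\quad\liminf_{n\to\infty}\frac1{a_n}\log\mathbb{P}(\|Y_n\|>s)=-\underline\gamma.$$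
   Context: Convention: $\log0=-\infty$. *)

From HB Require Import structures.
From mathcomp Require Import all_boot all_order all_algebra.
From mathcomp Require Import all_classical all_reals all_analysis.
Set Implicit Arguments. Unset Strict Implicit. Unset Printing Implicit Defensive.
Import Order.TTheory GRing.Theory Num.Theory.
Import numFieldNormedType.Exports.
Local Open Scope classical_set_scope.
Local Open Scope ring_scope.

Definition separable_space (B : topologicalType) : Prop :=
  exists D : set B, countable D /\ closure D = setT.

Definition borel_set (B : topologicalType) (A : set B) : Prop :=
  <<s [set U : set B | open U] >> A.

Section Defs.
Context (R : realType) (d : measure_display) (T : measurableType d)
        (P : probability T R) (B : normedModType R).

Definition B_random_variable (X : T -> B) : Prop :=
  forall A : set B, borel_set A -> measurable (X @^-1` A).

Definition cvg_in_prob0 (X : nat -> T -> B) : Prop :=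
  forall e : R, 0 < e ->
    (fun n => P [set w | (e < `|X n w|)%R ]) @ \oo --> 0%E.

Definition fdd_event (X : nat -> T -> B) (N : nat) (A : nat -> set B) : set T :=
  \bigcap_(i in `I_N) (X i @^-1` A i).

(* X' is an independent copy of X: X' has the same joint law (all
   finite-dimensional distributions) as X, and the sequence X' is independent
   of the sequence X (product rule on all finite-dimensional cylinder events,
   which generate the product sigma-algebras). *)
Definition independent_copy (X X' : nat -> T -> B) : Prop :=
  (forall n, B_random_variable (X' n)) /\
  (forall N (A : nat -> set B), (forall i, borel_set (A i)) ->
     P (fdd_event X' N A) = P (fdd_event X N A)) /\
  (forall N (A C : nat -> set B), (forall i, borel_set (A i)) ->
     (forall i, borel_set (C i)) ->
     P (fdd_event X N A `&` fdd_event X' N C) =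
     (P (fdd_event X N A) * P (fdd_event X' N C))%E).

(* (1/a_n) log P(||X_n|| > s), with log 0 = -oo. *)
Definition log_rate (a : nat -> R) (X : nat -> T -> B) (s : R) (n : nat) : \bar R :=
  ((a n)^-1)%:E * lne (P [set w | (s < `|X n w|)%R ]).


End Defs.

From HB Require Import structures.
From mathcomp Require Import all_boot all_order all_algebra.
From mathcomp Require Import all_classical all_reals all_analysis.
From mathcomp Require Import lra.
Import Order.TTheory GRing.Theory Num.Theory.
Import numFieldNormedType.Exports.
Local Open Scope classical_set_scope.
Local Open Scope ring_scope.

(* Write p_n(s) = P(|Y_n| > s) and q_n(s) = P(|Y_n - Y'_n| > s).  The proof
   compares the two tail functions up to a constant factor and a change of
   level s, which the exponential scale a_n -> oo cannot see:
   - lower bound: q_n(2s) <= 2 p_n(s) for all n (union bound, Y'_n ~ Y_n);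
   - upper bound: p_n(s) P(|Y'_n| <= s/2) <= q_n(s/2) by independence, and
     P(|Y'_n| <= s/2) >= 1/2 eventually since Y_n -> 0 in probability, so
     p_n(s) <= 2 q_n(s/2) eventually.
   By the comparison principle for rates [scaled_lne_limn_le], the upper and
   lower rates of p(s) are squeezed between those of q(2s) and q(s/2), which
   both equal -gbar (resp. -glow) by hypothesis. *)

Section LimnComparison.
Context {R : realType}.
Local Open Scope ereal_scope.
Implicit Types u v : (\bar R)^nat.

(* Upper and lower limits only depend on the tail of a sequence, hence are
   monotone with respect to an eventual inequality. *)
Lemma limn_esup_le_near u v : (\forall n \near \oo, u n <= v n) ->
  limn_esup u <= limn_esup v.
Proof.
move=> [N _ uv]; rewrite !limn_esup_lim.
apply: lee_lim; [exact: is_cvg_esups | exact: is_cvg_esups |].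
exists N => // n /= Nn; apply: ge_ereal_sup => _ [k /= nk <-].
apply: le_trans (uv k _) _; first by rewrite /= (leq_trans Nn nk).
by apply: ereal_sup_ubound; exists k.
Qed.

Lemma limn_einf_le_near u v : (\forall n \near \oo, u n <= v n) ->
  limn_einf u <= limn_einf v.
Proof.
move=> [N _ uv]; rewrite !limn_einf_lim.
apply: lee_lim; [exact: is_cvg_einfs | exact: is_cvg_einfs |].
exists N => // n /= Nn; apply: le_ereal_inf_tmp => _ [k /= nk <-].
apply: le_trans (uv k _); last by rewrite /= (leq_trans Nn nk).
by apply: ereal_inf_lbound; exists k.
Qed.

(* Companion of the library's [limn_einf_shift], obtained by duality. *)
Lemma limn_esup_shift u (c : R) :
  limn_esup (fun n => c%:E + u n) = c%:E + limn_esup u.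
Proof.
have -> : (fun n => c%:E + u n) = -%E \o (fun n => (- c)%:E + (- u n)).
  by apply: funext => n /=; rewrite oppeD // oppeK EFinN oppeK.
rewrite limn_esupN limn_einf_shift // oppeD // EFinN oppeK.
by rewrite (limn_einfN u) oppeK.
Qed.

Lemma limn_le_slack u v :
  (forall e : R, (0 < e)%R -> \forall n \near \oo, u n <= e%:E + v n) ->
  limn_esup u <= limn_esup v /\ limn_einf u <= limn_einf v.
Proof.
move=> uv; split; apply/lee_addgt0Pr => e e0; rewrite addeC.
  by rewrite -limn_esup_shift; apply: limn_esup_le_near; exact: uv.
by rewrite -limn_einf_shift //; apply: limn_einf_le_near; exact: uv.
Qed.

End LimnComparison.

Definition scaled_lne {R : realType} (a : nat -> R) (u : (\bar R)^nat) (n : nat)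
  : \bar R := ((a n)^-1)%:E * lne (u n).

Lemma scaled_lne_le_mul {R : realType} {K a : R} {x y : \bar R} :
  0 < K -> 0 < a -> x \is a fin_num -> y \is a fin_num -> (0 <= y)%E ->
  (x <= K%:E * y)%E ->
  ((a^-1)%:E * lne x <= (ln K / a)%:E + (a^-1)%:E * lne y)%E.
Proof.
move=> K0 a0; case: x => [x||] //; case: y => [y||] // _ _ y0 xKy.
have [x0 | x0] := leP x 0.
  by rewrite le0_lneNy ?lee_fin // gt0_muleNy ?leNye // lte_fin invr_gt0.
have y0' : 0 < y.
  rewrite lt_def -lee_fin y0 andbT; apply: contraTneq xKy => ->.
  by rewrite mule0 lee_fin -ltNge.
rewrite !lne_EFin // -!EFinM -EFinD lee_fin mulrC [_^-1 * _]mulrC -mulrDl.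
rewrite ler_pM2r ?invr_gt0 // -lnM ?posrE //.
by rewrite ler_ln ?posrE ?mulr_gt0 // -lee_fin EFinM.
Qed.

Lemma scaled_lne_limn_le {R : realType} (a : nat -> R) (K : R)
    (p q : (\bar R)^nat) :
  a @ \oo --> +oo -> (forall n, 0 < a n) -> 0 < K ->
  (forall n, p n \is a fin_num) -> (forall n, q n \is a fin_num) ->
  (forall n, 0 <= q n)%E ->
  (\forall n \near \oo, p n <= K%:E * q n)%E ->
  (limn_esup (scaled_lne a p) <= limn_esup (scaled_lne a q))%E /\
  (limn_einf (scaled_lne a p) <= limn_einf (scaled_lne a q))%E.
Proof.
move=> ainfty a0 K0 pfin qfin q0 pKq; apply: limn_le_slack => e e0.
have /cvgryPge /(_ (ln K / e)) a_large := ainfty.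
apply: filterS2 pKq a_large => n pKqn lnKe.
rewrite /scaled_lne.
apply: le_trans (scaled_lne_le_mul K0 (a0 n) (pfin n) (qfin n) (q0 n) pKqn) _.
rewrite leeD2r // lee_fin ler_pdivrMr //.
by rewrite ler_pdivrMr // mulrC in lnKe.
Qed.

Lemma countable_bigcup_measurable d (T : measurableType d) (U : Type)
    (D : set U) (F : U -> set T) :
  countable D -> (forall x, D x -> measurable (F x)) ->
  measurable (\bigcup_(x in D) F x).
Proof.
move=> cD mF; have [->|/set0P[x0 Dx0]] := eqVneq D set0.
  by rewrite bigcup_set0.
move/countable_injP: cD => [f injf].
have -> : \bigcup_(x in D) F x =
          \bigcup_(n in f @` D) F ('pinv_(cst x0) D f n).
  apply/seteqP; split=> [t [x Dx Ft]|t [_ [x Dx <-]]].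
    by exists (f x); [exists x | rewrite pinvKV ?inE].
  by rewrite pinvKV ?inE // => Ft; exists x.
by apply: bigcup_measurable => _ [x Dx <-]; rewrite pinvKV ?inE //; exact: mF.
Qed.

Section DenseApproximation.
Context {R : realType} {B : normedModType R}.

(* This expresses the event [s < |X - X'|] through countably many
   rectangles. *)
Lemma norm_diff_gt_dense (D : set B) (s : R) (u v : B) :
  closure D = setT ->
  s < `|u - v| <->
  exists x, D x /\ exists y, D y /\ exists q : rat,
    s + 2 * ratr q < `|x - y| /\ ball x (ratr q) u /\ ball y (ratr q) v.
Proof.
move=> Ddense; split.
- move=> suv.
  have e0 : 0 < (`|u - v| - s) / 4 by rewrite divr_gt0 // subr_gt0.
  have [q] := rat_in_itvoo e0; rewrite in_itv /= => /andP[q0 qe].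
  have [Du Dv] : closure D u /\ closure D v by rewrite Ddense.
  have [x [Dx xu]] := Du _ (nbhsx_ballx u _ q0).
  have [y [Dy yv]] := Dv _ (nbhsx_ballx v _ q0).
  exists x; split => //; exists y; split => //; exists q.
  move: xu yv; rewrite -!ball_normE /ball_ /= => xu yv.
  rewrite (distrC x u) (distrC y v); split => //.
  have := ler_distD x u v; have := ler_distD y x v.
  rewrite (distrC y v); lra.
- move=> [x [_ [y [_ [q [sxy []]]]]]]; rewrite -!ball_normE /ball_ /= => xu yv.
  have := ler_distD u x y; have := ler_distD v u y.
  rewrite (distrC v y); lra.
Qed.

Lemma borel_open (U : set B) : open U -> borel_set U.
Proof. by move=> oU; apply: sub_sigma_algebra. Qed.

Lemma borel_norm_gt (r : R) : borel_set [set x : B | r < `|x|].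
Proof.
apply: borel_open; apply: (@open_comp _ _ (@Num.Def.normr _ B) [set y : R | r < y]).
  by move=> x _; exact: norm_continuous.
exact: open_gt.
Qed.

(* In a separable space the event [s < |X - X'|] is measurable for any two
   random variables [X], [X'] (without separability, Borel sets of [B x B]
   need not be generated by rectangles). *)
Lemma measurable_norm_diff_gt d (T : measurableType d) (X X' : T -> B)
    (s : R) :
  separable_space B -> B_random_variable X -> B_random_variable X' ->
  measurable [set w | s < `|X w - X' w|].
Proof.
move=> [D [cD Ddense]] mX mX'.
pose box (x y : B) (q : rat) : set T :=
  if s + 2 * ratr q < `|x - y|
  then X @^-1` ball x (ratr q) `&` X' @^-1` ball y (ratr q) else set0.
have -> : [set w | s < `|X w - X' w|] =
    \bigcup_(x in D) \bigcup_(y in D) \bigcup_q box x y q.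
  apply/seteqP; split => w /=.
  - move=> /(norm_diff_gt_dense _ _ _ _ Ddense) [x [Dx [y [Dy [q [sxy xy]]]]]].
    by exists x => //; exists y => //; exists q => //; rewrite /box sxy.
  - move=> [x Dx [y Dy [q _]]]; rewrite /box; case: ifPn => [sxy [/= xw yw]|_ []//].
    by apply/(norm_diff_gt_dense _ _ _ _ Ddense); exists x; split => //;
       exists y; split => //; exists q.
apply: countable_bigcup_measurable => // x _.
apply: countable_bigcup_measurable => // y _.
apply: bigcupT_measurable_rat => q; rewrite /box; case: ifP => _ //.
by apply: measurableI; [apply: mX | apply: mX']; apply: borel_open; exact: ball_open.
Qed.

End DenseApproximation.

Section Symmetrization.
Context {R : realType} {d : measure_display} {T : measurableType d}
  (P : probability T R) {B : normedModType R}.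

Lemma fdd_event_single (X : nat -> T -> B) n (A : set B) :
  fdd_event X n.+1 (fun i => if i == n then A else setT) = X n @^-1` A.
Proof.
apply/seteqP; split=> w /=; first by move=> /(_ n (ltnSn n)); rewrite eqxx.
by move=> Xnw i _; case: eqP => [->|].
Qed.

Lemma cvg_in_prob0_small {X : nat -> T -> B} {r e : R} :
  cvg_in_prob0 P X -> 0 < r -> 0 < e ->
  \forall n \near \oo, (P [set w | (r < `|X n w|)%R] <= e%:E)%E.
Proof.
move=> cvgX r0 e0.
have small := cvgX r r0 _ (nbhs_open_ereal_lt (f := fun=> e) e0).
by near=> n; apply/ltW; near: n.
Unshelve. all: by end_near.
Qed.

Variables (Y Y' : nat -> T -> B).
Hypothesis sepB : separable_space B.
Hypothesis rvY : forall n, B_random_variable (Y n).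
Hypothesis copyY : independent_copy P Y Y'.

Let rvY' n : B_random_variable (Y' n).
Proof. by case: copyY. Qed.

Lemma copy_same_law n (A : set B) :
  borel_set A -> P (Y' n @^-1` A) = P (Y n @^-1` A).
Proof.
move=> bA; have [_ [lawY' _]] := copyY.
have := lawY' n.+1 (fun i => if i == n then A else setT).
rewrite !fdd_event_single => -> // i; case: ifP => // _.
by apply: borel_open; exact: openT.
Qed.

Lemma copy_independent n (A C : set B) :
  borel_set A -> borel_set C ->
  P (Y n @^-1` A `&` Y' n @^-1` C) = (P (Y n @^-1` A) * P (Y' n @^-1` C))%E.
Proof.
move=> bA bC; have [_ [_ indep]] := copyY.
have bT : borel_set [set: B] by apply: borel_open; exact: openT.
have := indep n.+1 (fun i => if i == n then A else setT)
                   (fun i => if i == n then C else setT).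
by rewrite !fdd_event_single => -> // i; case: ifP.
Qed.

Let mY n r : measurable [set w | r < `|Y n w|].
Proof. exact: rvY (borel_norm_gt r). Qed.

Let mY' n r : measurable [set w | r < `|Y' n w|].
Proof. exact: rvY' (borel_norm_gt r). Qed.

Let mYhat n r : measurable [set w | r < `|Y n w - Y' n w|].
Proof. exact: measurable_norm_diff_gt. Qed.

(* Symmetrization, lower bound: if [2r < |Y - Y'|] then [|Y|] or [|Y'|]
   exceeds [r], and both have the same law. *)
Lemma symmetrization_lower n (r : R) :
  (P [set w | (2 * r < `|Y n w - Y' n w|)%R] <=
   2%:E * P [set w | (r < `|Y n w|)%R])%E.
Proof.
have cover : [set w | 2 * r < `|Y n w - Y' n w|] `<=`
             [set w | r < `|Y n w|] `|` [set w | r < `|Y' n w|].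
  move=> w /= Yhat_gt; have := ler_normB (Y n w) (Y' n w).
  by case: (ltP r `|Y n w|) => Yle; [left | right => /=; lra].
apply: le_trans (le_measure P _ _ cover) _; rewrite ?inE.
- exact: mYhat.
- exact: measurableU.
apply: le_trans (measureU2 _ (mY n r) (mY' n r)) _.
rewrite [X in (_ + X <= _)%E](copy_same_law n _ (borel_norm_gt r)).
by rewrite (mule_natl _ 2); exact: lexx.
Qed.

Let norm_le_preimage (X : T -> B) (r : R) :
  [set w | `|X w| <= r] = X @^-1` ~` [set x | r < `|x|].
Proof. by apply/seteqP; split => w /=; rewrite leNgt => /negP. Qed.

Lemma copy_norm_le n (r : R) :
  P [set w | `|Y' n w| <= r] = (1 - P [set w | (r < `|Y n w|)%R])%E.
Proof.
rewrite norm_le_preimage preimage_setC probability_setC; last exact: mY'.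
by rewrite [X in (1 - X)%E](copy_same_law n _ (borel_norm_gt r)).
Qed.

(* Weak symmetrization inequality: by independence, [|Y n| > s] together
   with [|Y' n| <= r] forces [|Y n - Y' n| > s - r]. *)
Lemma symmetrization_weak n (s r : R) :
  (P [set w | (s < `|Y n w|)%R] * P [set w | (`|Y' n w| <= r)%R] <=
   P [set w | (s - r < `|Y n w - Y' n w|)%R])%E.
Proof.
have bC : borel_set (~` [set x : B | r < `|x|]).
  by apply: sigma_algebraC; exact: borel_norm_gt.
rewrite norm_le_preimage -(copy_independent n _ _ (borel_norm_gt s) bC).
apply: le_measure; rewrite ?inE.
- by apply: measurableI; [exact: mY | exact: rvY' bC].
- exact: mYhat.
move=> w [/= Yw] /negP; rewrite -leNgt => Y'w.
have := ler_distD (Y' n w) (Y n w) 0; rewrite !subr0.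
lra.
Qed.

(* Symmetrization, upper bound: once [P (|Y n| > r) <= 1/2], the copy stays
   in the ball of radius [r] with probability at least [1/2]. *)
Lemma symmetrization_upper n (s r : R) :
  (P [set w | (r < `|Y n w|)%R] <= (1/2)%:E)%E ->
  (P [set w | (s < `|Y n w|)%R] <=
   2%:E * P [set w | (s - r < `|Y n w - Y' n w|)%R])%E.
Proof.
move=> small.
have half : ((1/2)%:E <= P [set w | (`|Y' n w| <= r)%R])%E.
  rewrite copy_norm_le leeBrDl ?fin_num_measure //.
  by apply: le_trans (leeD2r _ small) _; rewrite -EFinD (_ : 1/2 + 1/2 = 1 :> R) //; lra.
have p0 : (0 <= P [set w | (s < `|Y n w|)%R])%E by exact: measure_ge0.
apply: (le_trans _ (lee_wpmul2l _ (symmetrization_weak n s r))) => //.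
apply: (le_trans _ (lee_wpmul2l _ (lee_wpmul2l p0 half))) => //.
rewrite muleCA -EFinM (_ : 2 * (1/2) = 1 :> R) ?mule1 //; lra.
Qed.

End Symmetrization.

Theorem lemma3p2 (R : realType) (d : measure_display) (T : measurableType d)
  (P : probability T R) (B : completeNormedModType R)
  (Y Y' : nat -> T -> B) (a : nat -> R) (gbar glow : \bar R) :
  separable_space B ->
  (forall n, B_random_variable (Y n)) ->
  cvg_in_prob0 P Y ->
  independent_copy P Y Y' ->
  (forall n, 0 < a n) ->
  a @ \oo --> +oo ->
  (0 <= gbar)%E -> (gbar <= glow)%E ->
  (forall s : R, 0 < s ->
     limn_esup (log_rate P a (fun n w => Y n w - Y' n w) s) = (- gbar)%E /\
     limn_einf (log_rate P a (fun n w => Y n w - Y' n w) s) = (- glow)%E) ->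
  forall s : R, 0 < s ->
    limn_esup (log_rate P a Y s) = (- gbar)%E /\
    limn_einf (log_rate P a Y s) = (- glow)%E.
Proof.
move=> sepB rvY cvgY copyY a0 ainfty _ _ rates s s0.
have rvY' n : B_random_variable (Y' n) by case: copyY.
have finY n r : P [set w | r < `|Y n w|] \is a fin_num.
  by apply: fin_num_measure; exact: rvY (borel_norm_gt r).
have finYhat n r : P [set w | r < `|Y n w - Y' n w|] \is a fin_num.
  by apply: fin_num_measure; exact: measurable_norm_diff_gt.
have s_half : 0 < s / 2 by rewrite divr_gt0.
have [sup_half inf_half] := rates _ s_half.
have [sup_dbl inf_dbl] := rates (2 * s) (mulr_gt0 (ltr0n _ 2) s0).
have [le_sup le_inf] :
    (limn_esup (log_rate P a Y s) <=
     limn_esup (log_rate P a (fun n w => (Y n w - Y' n w)%R) (s / 2)))%E /\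
    (limn_einf (log_rate P a Y s) <=
     limn_einf (log_rate P a (fun n w => (Y n w - Y' n w)%R) (s / 2)))%E.
  apply: (scaled_lne_limn_le a 2) => //.
  have half_pos : 0 < 1 / 2 :> R by rewrite divr_gt0.
  have half_diff : s - s / 2 = s / 2 by lra.
  move: (cvg_in_prob0_small P cvgY s_half half_pos); apply: filterS => n small.
  by have := symmetrization_upper P Y Y' sepB rvY copyY n s (s / 2) small;
    rewrite half_diff.
have [ge_sup ge_inf] :
    (limn_esup (log_rate P a (fun n w => (Y n w - Y' n w)%R) (2 * s)) <=
     limn_esup (log_rate P a Y s))%E /\
    (limn_einf (log_rate P a (fun n w => (Y n w - Y' n w)%R) (2 * s)) <=
     limn_einf (log_rate P a Y s))%E.
  apply: (scaled_lne_limn_le a 2) => //.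
  exact: nearW (symmetrization_lower P Y Y' sepB rvY copyY ^~ s).
rewrite sup_half inf_half in le_sup le_inf.
rewrite sup_dbl inf_dbl in ge_sup ge_inf.
by split; apply/le_anti/andP; split.
Qed.
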